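(* Let $\Sigma$ be a finite alphabet. A language $L\subseteq\Sigma^*$ is regular in the classical sense if and only if the set $\{\triangleleft\, w\,\triangleright \mid w\in L\}$ is the language of arrows recognized by some nondeterministic finite-state automaton over the category $\mathcal{F}(\mathrm{Br}(\Sigma))$.
   Context: $\mathrm{Br}(\Sigma)$ is the graph with three nodes $\bot,*,\top$, a loop $a:*\to *$ for each $a\in\Sigma$, an edge $\triangleleft:\bot\to *$ and an edge $\triangleright:*\to\top$; $\mathcal{F}(\mathrm{Br}(\Sigma))$ is the free category it generates (objects are nodes, arrows are finite paths), so the arrows $\bot\to\top$ are exactly the paths $\triangleleft\, w\,\triangleright$ for $w\in\Sigma^*$. Composition is written diagrammatically. A functor $p:\mathcal{D}\to\mathcal{C}$ is ULF if for every arrow $\alpha$ of $\mathcal{D}$ and arrows $u,v$ of $\mathcal{C}$ with $p(\alpha)=uv$ there is a unique pair $\beta,\gamma$ with $\alpha=\beta\gamma$, $p(\beta)=u$, $p(\gamma)=v$; it is finitary if $p^{-1}(A)$ and $p^{-1}(w)$ are finite for every object $A$ and arrow $w$ of $\mathcal{C}$. A nondeterministic finite-state automaton over a category $\mathcal{C}$ is a tuple $M=(\mathcal{C},\mathcal{Q},p,q_0,q_f)$ with $p:\mathcal{Q}\to\mathcal{C}$ a finitary ULF functor and $q_0,q_f$ objects of $\mathcal{Q}$; the language of arrows it recognizes is $\{p(\alpha)\mid \alpha:q_0\to q_f \text{ in } \mathcal{Q}\}\subseteq \mathcal{C}(p(q_0),p(q_f))$. ''Regular in the classical sense'' means recognized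 by a classical nondeterministic finite automaton over $\Sigma$ (finite set of states, finite set of labelled transitions, a set of initial states and a set of accepting states, no $\epsilon$-transitions). *)

From mathcomp Require Import all_boot.
From Stdlib Require List.

Set Implicit Arguments.
Unset Strict Implicit.
Unset Printing Implicit Defensive.

(* Composition is written DIAGRAMMATICALLY: cat_comp f g = "f then g" *)
(* and is only meaningful when cat_cod f = cat_dom g.                 *)
Record Cat := {
  cat_ob : Type;
  cat_arr : Type;
  cat_dom : cat_arr -> cat_ob;
  cat_cod : cat_arr -> cat_ob;
  cat_id : cat_ob -> cat_arr;
  cat_comp : cat_arr -> cat_arr -> cat_arr;
  cat_dom_id : forall A, cat_dom (cat_id A) = A;
  cat_cod_id : forall A, cat_cod (cat_id A) = A;
  cat_dom_comp : forall f g, cat_cod f = cat_dom g ->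
      cat_dom (cat_comp f g) = cat_dom f;
  cat_cod_comp : forall f g, cat_cod f = cat_dom g ->
      cat_cod (cat_comp f g) = cat_cod g;
  cat_comp_idl : forall f, cat_comp (cat_id (cat_dom f)) f = f;
  cat_comp_idr : forall f, cat_comp f (cat_id (cat_cod f)) = f;
  cat_comp_assoc : forall f g h, cat_cod f = cat_dom g -> cat_cod g = cat_dom h ->
      cat_comp (cat_comp f g) h = cat_comp f (cat_comp g h)
}.

Record Functor (D C : Cat) := {
  fobj : cat_ob D -> cat_ob C;
  farr : cat_arr D -> cat_arr C;
  farr_dom : forall f, cat_dom (farr f) = fobj (cat_dom f);
  farr_cod : forall f, cat_cod (farr f) = fobj (cat_cod f);
  farr_id : forall A, farr (cat_id A) = cat_id (fobj A);
  farr_comp : forall f g, cat_cod f = cat_dom g ->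
      farr (cat_comp f g) = cat_comp (farr f) (farr g)
}.

Definition ULF (D C : Cat) (p : Functor D C) : Prop :=
  forall (alpha : cat_arr D) (u v : cat_arr C),
    cat_cod u = cat_dom v ->
    farr p alpha = cat_comp u v ->
    exists beta gamma : cat_arr D,
      [/\ cat_cod beta = cat_dom gamma,
          alpha = cat_comp beta gamma,
          farr p beta = u, farr p gamma = v &
          forall beta' gamma' : cat_arr D,
            cat_cod beta' = cat_dom gamma' ->
            alpha = cat_comp beta' gamma' ->
            farr p beta' = u -> farr p gamma' = v ->
            beta' = beta /\ gamma' = gamma].

Definition finitary (D C : Cat) (p : Functor D C) : Prop :=
  (forall A : cat_ob C, exists l : list (cat_ob D),
      forall X, fobj p X = A -> List.In X l) /\
  (forall w : cat_arr C, exists l : list (cat_arr D),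
      forall a, farr p a = w -> List.In a l).

Record CatNFA (C : Cat) := {
  nfa_Q : Cat;
  nfa_p : Functor nfa_Q C;
  nfa_ULF : ULF nfa_p;
  nfa_finitary : finitary nfa_p;
  nfa_q0 : cat_ob nfa_Q;
  nfa_qf : cat_ob nfa_Q
}.

Definition nfa_lang (C : Cat) (M : CatNFA C) : cat_arr C -> Prop :=
  fun w => exists alpha : cat_arr (nfa_Q M),
    [/\ cat_dom alpha = nfa_q0 M, cat_cod alpha = nfa_qf M &
        farr (nfa_p M) alpha = w].

Inductive brnode := NBot | NStar | NTop.

Definition brnode_eqb (x y : brnode) : bool :=
  match x, y with
  | NBot, NBot | NStar, NStar | NTop, NTop => true
  | _, _ => false
  end.

Lemma brnode_eqbP x y : brnode_eqb x y = true <-> x = y.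
Proof. by case: x; case: y. Qed.

Section Br.
Variable Sigma : finType.

(* edges: a loop a : * -> * for each letter, <| : bot -> *, |> : * -> top *)
Inductive bredge := ELoop of Sigma | ELeft | ERight.

Definition esrc (e : bredge) : brnode :=
  match e with ELoop _ => NStar | ELeft => NBot | ERight => NStar end.
Definition etgt (e : bredge) : brnode :=
  match e with ELoop _ => NStar | ELeft => NStar | ERight => NTop end.

Fixpoint path_ok (s : brnode) (es : seq bredge) : bool :=
  match es with
  | [::] => true
  | e :: es' => brnode_eqb (esrc e) s && path_ok (etgt e) es'
  end.

Fixpoint path_end (s : brnode) (es : seq bredge) : brnode :=
  match es with
  | [::] => s
  | e :: es' => path_end (etgt e) es'
  end.

Lemma path_end_cat s a b : path_end s (a ++ b) = path_end (path_end s a) b.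
Proof. by elim: a s => //= e a IH s. Qed.

Lemma path_ok_cat s a b :
  path_ok s (a ++ b) = path_ok s a && path_ok (path_end s a) b.
Proof. by elim: a s => //= e a IH s; rewrite IH andbA. Qed.

(* arrows of F(Br(Sigma)): finite paths (source node + list of edges) *)
Definition brArr := {x : brnode * seq bredge | path_ok x.1 x.2}.

Definition br_dom (f : brArr) : brnode := (val f).1.
Definition br_cod (f : brArr) : brnode := path_end (val f).1 (val f).2.
Definition br_id (A : brnode) : brArr := exist _ (A, [::]) (erefl true).
Definition br_comp (f g : brArr) : brArr :=
  odflt f (insub ((val f).1, (val f).2 ++ (val g).2)).

Lemma br_comp_val f g : br_cod f = br_dom g ->
  val (br_comp f g) = ((val f).1, (val f).2 ++ (val g).2).
Proof.
move=> H; rewrite /br_comp; case: insubP => [u _ -> //|].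
rewrite /= path_ok_cat (valP f) /=.
by move: (valP g); rewrite /br_cod /br_dom in H *; rewrite H => ->.
Qed.

Lemma br_dom_comp f g : br_cod f = br_dom g -> br_dom (br_comp f g) = br_dom f.
Proof. by move=> H; rewrite /br_dom br_comp_val. Qed.

Lemma br_cod_comp f g : br_cod f = br_dom g -> br_cod (br_comp f g) = br_cod g.
Proof.
by move=> H; rewrite /br_cod br_comp_val //= path_end_cat; rewrite /br_cod in H; rewrite H.
Qed.

Lemma br_comp_idl f : br_comp (br_id (br_dom f)) f = f.
Proof. by apply: val_inj; rewrite br_comp_val //=; case: f => -[]. Qed.

Lemma br_comp_idr f : br_comp f (br_id (br_cod f)) = f.
Proof. by apply: val_inj; rewrite br_comp_val //= cats0; case: f => -[]. Qed.

Lemma br_comp_assoc f g h : br_cod f = br_dom g -> br_cod g = br_dom h ->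
  br_comp (br_comp f g) h = br_comp f (br_comp g h).
Proof.
move=> Hfg Hgh; apply: val_inj.
have H1 : br_cod (br_comp f g) = br_dom h by rewrite br_cod_comp.
have H2 : br_cod f = br_dom (br_comp g h) by rewrite br_dom_comp.
rewrite (br_comp_val H1) (br_comp_val H2) (br_comp_val Hfg) (br_comp_val Hgh).
by rewrite /= catA.
Qed.

Definition FBr : Cat :=
  {| cat_ob := brnode; cat_arr := brArr; cat_dom := br_dom; cat_cod := br_cod;
     cat_id := br_id; cat_comp := br_comp;
     cat_dom_id := fun _ => erefl; cat_cod_id := fun _ => erefl;
     cat_dom_comp := br_dom_comp; cat_cod_comp := br_cod_comp;
     cat_comp_idl := br_comp_idl; cat_comp_idr := br_comp_idr;
     cat_comp_assoc := br_comp_assoc |}.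

(* the arrow  <| w |> : bot -> top *)
Lemma brWord_ok (w : seq Sigma) :
  path_ok NBot (ELeft :: map ELoop w ++ [:: ERight]).
Proof. by rewrite /=; elim: w. Qed.

Definition brWord (w : seq Sigma) : brArr :=
  exist _ (NBot, ELeft :: map ELoop w ++ [:: ERight]) (brWord_ok w).

Fixpoint nfa_accepts (Q : finType) (delta : Q -> Sigma -> Q -> bool)
    (F : {set Q}) (q : Q) (w : seq Sigma) : bool :=
  match w with
  | [::] => q \in F
  | a :: w' => [exists q' : Q, delta q a q' && nfa_accepts delta F q' w']
  end.

Definition classically_regular (L : seq Sigma -> Prop) : Prop :=
  exists (Q : finType) (delta : Q -> Sigma -> Q -> bool) (I F : {set Q}),
    forall w, L w <-> exists2 q, q \in I & nfa_accepts delta F q w.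

End Br.

(** A ULF functor lifts every factorisation of an arrow, so an arrow of the
    automaton from [q0] to [qf] over [<| a1 ... an |>] is the same thing as a
    chain of lifts of the single edges [<|], [a1], ..., [an], [|>] through
    objects over [*].  These objects form a finite set (finitarity), and the
    single-edge lifts between them are the transitions of a classical NFA.
    Conversely, a classical NFA gives a finite graph over [Br(Sigma)] (its states
    over [*], two extra nodes over [bot] and [top]); its free category maps to
    [F(Br(Sigma))] by forgetting nodes, this functor is ULF and finitary, and
    its single-edge lifts are exactly the transitions. *)
From HB Require Import structures.
From Stdlib Require Import ClassicalEpsilon.
From mathcomp Require Import all_boot.

Set Implicit Arguments.
Unset Strict Implicit.
Unset Printing Implicit Defensive.

Lemma ListInP (T : eqType) (x : T) (s : seq T) : reflect (List.In x s) (x \in s).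
Proof.
elim: s => [|y s IH] /=; first by constructor.
by rewrite in_cons; apply: (iffP orP) => [[/eqP->|/IH]|[->|/IH]]; auto.
Qed.

Section Lifts.
Variables (D C : Cat) (p : Functor D C).

Definition lifts (X Y : cat_ob D) (w : cat_arr C) : Prop :=
  exists f, [/\ cat_dom f = X, cat_cod f = Y & farr p f = w].

Lemma lifts_ends X Y w :
  lifts X Y w -> cat_dom w = fobj p X /\ cat_cod w = fobj p Y.
Proof. by case=> f [<- <- <-]; rewrite farr_dom farr_cod. Qed.

Lemma lifts_comp X Y Z u v :
  lifts X Y u -> lifts Y Z v -> lifts X Z (cat_comp u v).
Proof.
case=> f [fX fY <-] [g [gY gZ <-]].
have fg : cat_cod f = cat_dom g by rewrite fY gY.
by exists (cat_comp f g); rewrite cat_dom_comp // cat_cod_comp // farr_comp.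
Qed.

Lemma lifts_split X Z u v : ULF p -> cat_cod u = cat_dom v ->
  lifts X Z (cat_comp u v) -> exists Y, lifts X Y u /\ lifts Y Z v.
Proof.
move=> pULF uv [h [<- <- /(pULF h u v uv)[f [g [fg -> fu gv _]]]]].
exists (cat_cod f); split; first by exists f; rewrite cat_dom_comp.
by exists g; rewrite fg cat_cod_comp.
Qed.

End Lifts.

Definition bredge_code (S : finType) (e : bredge S) : S + bool :=
  match e with ELoop a => inl a | ELeft => inr false | ERight => inr true end.
Definition bredge_decode (S : finType) (x : S + bool) : bredge S :=
  match x with inl a => ELoop a | inr false => ELeft S | inr true => ERight S end.
Lemma bredge_codeK (S : finType) : cancel (@bredge_code S) (@bredge_decode S).
Proof. by case. Qed.
HB.instance Definition _ (S : finType) :=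
  Finite.copy (bredge S) (can_type (@bredge_codeK S)).

Section BrArrows.
Variable Sigma : finType.

Lemma brEdge_ok (e : bredge Sigma) : path_ok (esrc e) [:: e].
Proof. by rewrite /= andbT; apply/brnode_eqbP. Qed.

Definition brEdge (e : bredge Sigma) : brArr Sigma :=
  exist _ (esrc e, [:: e]) (brEdge_ok e).

Lemma starWord_ok (w : seq Sigma) :
  path_ok NStar (map (@ELoop Sigma) w ++ [:: ERight Sigma]).
Proof. by elim: w. Qed.

Definition starWord (w : seq Sigma) : brArr Sigma :=
  exist _ (NStar, map (@ELoop Sigma) w ++ [:: ERight Sigma]) (starWord_ok w).

Lemma starWord_nil : starWord [::] = brEdge (ERight Sigma).
Proof. exact: val_inj. Qed.

Lemma starWord_cons a w :
  starWord (a :: w) = br_comp (brEdge (ELoop a)) (starWord w).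
Proof. by apply: val_inj; rewrite br_comp_val. Qed.

Lemma brWord_starWord w : brWord w = br_comp (brEdge (ELeft Sigma)) (starWord w).
Proof. by apply: val_inj; rewrite br_comp_val. Qed.

Lemma brWord_inj : injective (@brWord Sigma).
Proof.
move=> w1 w2 /(f_equal val) [] /eqP.
by rewrite !cats1 eqseq_rcons eqxx andbT => /eqP /inj_map -> // a b [].
Qed.

Lemma br_comp_cancel (u v u' v' : brArr Sigma) :
  br_cod u = br_dom v -> br_cod u' = br_dom v' ->
  size (val u).2 = size (val u').2 -> br_comp u v = br_comp u' v' ->
  u = u' /\ v = v'.
Proof.
move=> uv u'v' size_eq /(f_equal val); rewrite !br_comp_val // => -[dom_eq].
move/eqP; rewrite eqseq_cat // => /andP[/eqP es_eq /eqP fs_eq].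
have u_eq : u = u' by apply: val_inj; exact: injective_projections.
split=> //; apply: val_inj; apply: injective_projections => //.
by rewrite -[(val v).1]/(br_dom v) -[(val v').1]/(br_dom v') -uv -u'v' u_eq.
Qed.

Lemma path_star_top es : path_ok NStar es -> path_end NStar es = NTop ->
  exists w, es = map (@ELoop Sigma) w ++ [:: ERight Sigma].
Proof.
elim: es => [|[a||] es IH] //= ok end_top.
- by have [w ->] := IH ok end_top; exists (a :: w).
- by exists [::]; case: es {IH} ok end_top => [|[]].
Qed.

Lemma brArr_bot_top (f : brArr Sigma) :
  br_dom f = NBot -> br_cod f = NTop -> exists w, f = brWord w.
Proof.
case: f => -[s es] ok; rewrite /br_dom /br_cod /= => s_bot; subst s.
case: es ok => [|[||] es] //= ok end_top.
have [w es_w] := path_star_top ok end_top.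
by exists w; apply: val_inj; rewrite /= es_w.
Qed.

End BrArrows.

Section Walks.
Variables (Sigma V : finType) (lab : V -> brnode).
Variables (edge : V -> bredge Sigma -> V -> bool).
Hypothesis edge_lab : forall s e t, edge s e t -> esrc e = lab s /\ etgt e = lab t.

Fixpoint walk_ok (s : V) (es : seq (bredge Sigma * V)) : bool :=
  if es is (e, t) :: es' then edge s e t && walk_ok t es' else true.

Definition walk_end (s : V) (es : seq (bredge Sigma * V)) : V := last s (unzip2 es).

Lemma walk_end_cat s a b : walk_end s (a ++ b) = walk_end (walk_end s a) b.
Proof. by rewrite /walk_end /unzip2 map_cat last_cat. Qed.

Lemma walk_ok_cat s a b :
  walk_ok s (a ++ b) = walk_ok s a && walk_ok (walk_end s a) b.
Proof. by elim: a s => [|[e t] a IH] s //=; rewrite IH andbA. Qed.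

Definition walkArr := {x : V * seq (bredge Sigma * V) | walk_ok x.1 x.2}.

Definition walk_dom (f : walkArr) : V := (val f).1.
Definition walk_cod (f : walkArr) : V := walk_end (val f).1 (val f).2.
Definition walk_id (s : V) : walkArr := exist _ (s, [::]) erefl.
Definition walk_comp (f g : walkArr) : walkArr :=
  odflt f (insub ((val f).1, (val f).2 ++ (val g).2)).

Lemma walk_comp_val f g : walk_cod f = walk_dom g ->
  val (walk_comp f g) = ((val f).1, (val f).2 ++ (val g).2).
Proof.
move=> fg; rewrite /walk_comp insubT //= walk_ok_cat (valP f).
by rewrite /walk_cod /walk_dom in fg; rewrite fg (valP g).
Qed.

Lemma walk_dom_comp f g :
  walk_cod f = walk_dom g -> walk_dom (walk_comp f g) = walk_dom f.
Proof. by move=> fg; rewrite /walk_dom walk_comp_val. Qed.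

Lemma walk_cod_comp f g :
  walk_cod f = walk_dom g -> walk_cod (walk_comp f g) = walk_cod g.
Proof.
by move=> fg; rewrite /walk_cod walk_comp_val //= walk_end_cat -/(walk_cod f) fg.
Qed.

Lemma walk_comp_idl f : walk_comp (walk_id (walk_dom f)) f = f.
Proof. by apply: val_inj; rewrite walk_comp_val //; case: f => -[]. Qed.

Lemma walk_comp_idr f : walk_comp f (walk_id (walk_cod f)) = f.
Proof. by apply: val_inj; rewrite walk_comp_val //= cats0; case: f => -[]. Qed.

Lemma walk_comp_assoc f g h : walk_cod f = walk_dom g -> walk_cod g = walk_dom h ->
  walk_comp (walk_comp f g) h = walk_comp f (walk_comp g h).
Proof.
move=> fg gh; apply: val_inj.
by rewrite !walk_comp_val ?walk_cod_comp ?walk_dom_comp //= catA.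
Qed.

Definition WalkCat : Cat :=
  {| cat_ob := V; cat_arr := walkArr; cat_dom := walk_dom; cat_cod := walk_cod;
     cat_id := walk_id; cat_comp := walk_comp;
     cat_dom_id := fun _ => erefl; cat_cod_id := fun _ => erefl;
     cat_dom_comp := walk_dom_comp; cat_cod_comp := walk_cod_comp;
     cat_comp_idl := walk_comp_idl; cat_comp_idr := walk_comp_idr;
     cat_comp_assoc := walk_comp_assoc |}.

Lemma walk_ok_path s es : walk_ok s es -> path_ok (lab s) (unzip1 es).
Proof.
elim: es s => [|[e t] es IH] s //= /andP[/edge_lab[-> ->] /IH ->].
by rewrite andbT; apply/brnode_eqbP.
Qed.

Lemma walk_end_path s es :
  walk_ok s es -> path_end (lab s) (unzip1 es) = lab (walk_end s es).
Proof. by elim: es s => [|[e t] es IH] s //= /andP[/edge_lab[_ ->] /IH]. Qed.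

Definition walk_label (f : walkArr) : brArr Sigma :=
  exist _ (lab (val f).1, unzip1 (val f).2) (walk_ok_path (valP f)).

Lemma walk_label_cod f : br_cod (walk_label f) = lab (walk_cod f).
Proof. exact: walk_end_path (valP f). Qed.

Lemma walk_label_id s : walk_label (walk_id s) = br_id Sigma (lab s).
Proof. exact: val_inj. Qed.

Lemma walk_label_comp f g : walk_cod f = walk_dom g ->
  walk_label (walk_comp f g) = br_comp (walk_label f) (walk_label g).
Proof.
move=> fg; apply: val_inj; rewrite br_comp_val; last by rewrite walk_label_cod fg.
by rewrite /= walk_comp_val //= /unzip1 map_cat.
Qed.

Definition walkFun : Functor WalkCat (FBr Sigma) :=
  @Build_Functor WalkCat (FBr Sigma) lab walk_label (fun _ => erefl)
    walk_label_cod walk_label_id walk_label_comp.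

Lemma walk_split (f : walkArr) n : n <= size (val f).2 ->
  exists g h, [/\ walk_cod g = walk_dom h, f = walk_comp g h & size (val g).2 = n].
Proof.
case: f => -[s es] /= ok n_le.
have /andP[ok1 ok2] :
    walk_ok s (take n es) && walk_ok (walk_end s (take n es)) (drop n es).
  by rewrite -walk_ok_cat cat_take_drop.
exists (exist _ (s, take n es) ok1), (exist _ (walk_end s (take n es), drop n es) ok2).
split; rewrite ?size_takel //.
by apply: val_inj; rewrite walk_comp_val //= cat_take_drop.
Qed.

Lemma walk_comp_cancel g h g' h' :
  walk_cod g = walk_dom h -> walk_cod g' = walk_dom h' ->
  size (val g).2 = size (val g').2 -> walk_comp g h = walk_comp g' h' ->
  g = g' /\ h = h'.
Proof.
move=> gh g'h' size_eq /(f_equal val); rewrite !walk_comp_val // => -[dom_eq].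
move/eqP; rewrite eqseq_cat // => /andP[/eqP es_eq /eqP fs_eq].
have g_eq : g = g' by apply: val_inj; exact: injective_projections.
split=> //; apply: val_inj; apply: injective_projections => //.
by rewrite -[(val h).1]/(walk_dom h) -[(val h').1]/(walk_dom h') -gh -g'h' g_eq.
Qed.

Lemma walkFun_ULF : ULF walkFun.
Proof.
move=> f u v uv fuv.
have n_le : size (val u).2 <= size (val f).2.
  have := f_equal (fun x => size (val x).2) fuv.
  by rewrite /= br_comp_val // size_map size_cat => ->; exact: leq_addr.
have [g [h [gh f_gh g_size]]] := walk_split n_le.
have [gu hv] : walk_label g = u /\ walk_label h = v.
  apply: br_comp_cancel => //; first by rewrite walk_label_cod gh.
    by rewrite /= size_map.
  by rewrite -walk_label_comp -?f_gh.
exists g, h; split => // g' h' g'h' f_g'h' g'u _.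
apply: walk_comp_cancel => //; last by rewrite -f_gh f_g'h'.
by rewrite g_size -g'u /= size_map.
Qed.

Lemma walkFun_finitary : finitary walkFun.
Proof.
split=> [A|w]; first by exists (enum V) => X _; apply/ListInP; rewrite mem_enum.
pose n := size (val w).2.
exists (pmap (insub : _ -> option walkArr)
  [seq (x.1, val x.2) | x <- enum {: V * n.-tuple (bredge Sigma * V)}]) => f fw.
apply/ListInP; rewrite mem_pmap_sub; apply/mapP.
have f_size : size (val f).2 == n by rewrite /n -fw /= size_map.
by exists ((val f).1, Tuple f_size); rewrite ?mem_enum //= -surjective_pairing.
Qed.

Lemma walk_lifts_edge s e t : reflect (lifts walkFun s t (brEdge e)) (edge s e t).
Proof.
apply: (iffP idP) => [st_edge | [f [<- <- f_e]]].
  have ok : walk_ok s [:: (e, t)] by rewrite /= st_edge.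
  exists (exist _ (s, [:: (e, t)]) ok); split => //.
  by apply: val_inj; rewrite /= (edge_lab st_edge).1.
case: f f_e => -[s' es] ok /(f_equal (fun x => (val x).2)) /=.
rewrite /walk_dom /walk_cod /=.
by case: es ok => [|[e' t'] [|]] //=; rewrite andbT => ok [<-].
Qed.

End Walks.

Section WordLanguage.
Variables (Sigma : finType) (M : CatNFA (FBr Sigma)) (L : seq Sigma -> Prop).
Local Notation p := (nfa_p M).

Lemma word_lang_of_nfa_lang :
  (forall alpha, nfa_lang M alpha <-> exists2 w, L w & alpha = brWord w) ->
  forall w, L w <-> nfa_lang M (brWord w).
Proof.
move=> HM w; split=> [Lw|]; first by apply/HM; exists w.
by case/HM=> w' Lw' /brWord_inj ->.
Qed.

Lemma nfa_lang_of_word_lang :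
  fobj p (nfa_q0 M) = NBot -> fobj p (nfa_qf M) = NTop ->
  (forall w, L w <-> nfa_lang M (brWord w)) ->
  forall alpha, nfa_lang M alpha <-> exists2 w, L w & alpha = brWord w.
Proof.
move=> q0_bot qf_top HL alpha; split=> [accepted|[w /HL Lw ->] //].
have [dom_bot cod_top] := lifts_ends accepted.
have [w alpha_w] := brArr_bot_top (etrans dom_bot q0_bot) (etrans cod_top qf_top).
by exists w => //; apply/HL; rewrite -alpha_w.
Qed.

End WordLanguage.

Section Simulation.
Variables (Sigma : finType) (M : CatNFA (FBr Sigma)).
Variables (Q : finType) (st : Q -> cat_ob (nfa_Q M)).
Variables (delta : Q -> Sigma -> Q -> bool) (I F : {set Q}).
Local Notation p := (nfa_p M).

Hypothesis st_onto : forall X, fobj p X = NStar -> exists q, st q = X.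
Hypothesis deltaP : forall q a q',
  reflect (lifts p (st q) (st q') (brEdge (ELoop a))) (delta q a q').
Hypothesis initP : forall q,
  reflect (lifts p (nfa_q0 M) (st q) (brEdge (ELeft Sigma))) (q \in I).
Hypothesis finalP : forall q,
  reflect (lifts p (st q) (nfa_qf M) (brEdge (ERight Sigma))) (q \in F).

Lemma lifts_through_star X Z e w : etgt e = NStar ->
  lifts p X Z (br_comp (brEdge e) (starWord w)) <->
  exists q, lifts p X (st q) (brEdge e) /\ lifts p (st q) Z (starWord w).
Proof.
move=> e_star; split=> [|[q [Xq qZ]]]; last exact: (lifts_comp Xq qZ).
have composable : br_cod (brEdge e) = br_dom (starWord w) by [].
case/(lifts_split (@nfa_ULF _ M) composable) => Y [XY YZ].
have [q qY] : exists q, st q = Y by apply: st_onto; rewrite -(lifts_ends XY).2.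
by exists q; rewrite qY.
Qed.

Lemma nfa_accepts_lifts q w :
  nfa_accepts delta F q w <-> lifts p (st q) (nfa_qf M) (starWord w).
Proof.
elim: w q => [|a w IH] q /=; first by rewrite starWord_nil; split=> /finalP.
rewrite starWord_cons lifts_through_star //; split.
- by case/existsP=> q' /andP[/deltaP qq' /IH q'f]; exists q'.
- by case=> q' [/deltaP qq' /IH q'f]; apply/existsP; exists q'; rewrite qq'.
Qed.

Lemma nfa_lang_brWord w :
  nfa_lang M (brWord w) <-> exists2 q, q \in I & nfa_accepts delta F q w.
Proof.
rewrite /nfa_lang -/(lifts p _ _ _) brWord_starWord lifts_through_star //.
by split=> [[q [/initP Iq /nfa_accepts_lifts qw]] | [q /initP Iq /nfa_accepts_lifts qw]];
  exists q.
Qed.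

End Simulation.

Lemma classically_regular_nfa_lang (Sigma : finType) (M : CatNFA (FBr Sigma)) :
  classically_regular (fun w => nfa_lang M (brWord w)).
Proof.
have [l star_in_l] := (nfa_finitary M).1 NStar.
pose st (i : 'I_(List.length l)) := List.nth i l (nfa_q0 M).
pose lifts_dec X Y e := excluded_middle_informative (lifts (nfa_p M) X Y (brEdge e)).
exists _, (fun i a j => lifts_dec (st i) (st j) (ELoop a)),
  [set i | lifts_dec (nfa_q0 M) (st i) (ELeft Sigma)],
  [set i | lifts_dec (st i) (nfa_qf M) (ERight Sigma)].
move=> w; apply: (nfa_lang_brWord (st := st)) => [X /star_in_l||q|q].
- case/(List.In_nth _ _ (nfa_q0 M)) => n [/ltP n_lt <-].
  by exists (Ordinal n_lt).
- by move=> *; exact: sumboolP.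
- by rewrite inE; exact: sumboolP.
- by rewrite inE; exact: sumboolP.
Qed.

Section ClassicalNFA.
Variables (Sigma Q : finType) (delta : Q -> Sigma -> Q -> bool) (I F : {set Q}).

Definition nfa_lab (x : bool + Q) : brnode :=
  match x with inl false => NBot | inl true => NTop | inr _ => NStar end.

Definition nfa_edge (s : bool + Q) (e : bredge Sigma) (t : bool + Q) : bool :=
  match e, s, t with
  | ELeft, inl false, inr q => q \in I
  | ELoop a, inr q, inr q' => delta q a q'
  | ERight, inr q, inl true => q \in F
  | _, _, _ => false
  end.

Lemma nfa_edge_lab s e t :
  nfa_edge s e t -> esrc e = nfa_lab s /\ etgt e = nfa_lab t.
Proof. by case: e => [a||]; case: s => [[]|q]; case: t => [[]|q']. Qed.

Definition catNFA_of_nfa : CatNFA (FBr Sigma) :=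
  {| nfa_Q := WalkCat nfa_edge; nfa_p := walkFun nfa_edge_lab;
     nfa_ULF := walkFun_ULF (edge_lab := nfa_edge_lab);
     nfa_finitary := walkFun_finitary nfa_edge_lab;
     nfa_q0 := inl false; nfa_qf := inl true |}.

Lemma catNFA_of_nfa_brWord w :
  nfa_lang catNFA_of_nfa (brWord w) <-> exists2 q, q \in I & nfa_accepts delta F q w.
Proof.
apply: (@nfa_lang_brWord _ catNFA_of_nfa _ inr) => [[[]|q] // _|q a q'|q|q].
- by exists q.
all: exact: walk_lifts_edge.
Qed.

End ClassicalNFA.

Theorem mainTheorem4 (Sigma : finType) (L : seq Sigma -> Prop) :
  classically_regular L <->
  exists M : CatNFA (FBr Sigma),
    forall alpha : cat_arr (FBr Sigma),
      nfa_lang M alpha <-> exists2 w, L w & alpha = brWord w.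
Proof.
split=> [[Q [delta [I [F L_nfa]]]] | [M M_L]].
- exists (catNFA_of_nfa delta I F); apply: nfa_lang_of_word_lang => // w.
  by rewrite catNFA_of_nfa_brWord L_nfa.
- have [Q [delta [I [F M_nfa]]]] := classically_regular_nfa_lang M.
  by exists Q, delta, I, F => w; rewrite (word_lang_of_nfa_lang M_L) M_nfa.
Qed.
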